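(* Let $\mathcal{F}$ be a holomorphic foliation by curves defined near a point $p$ of $\mathbb{C}^n$ by the polynomial vector field $X_p=\sum_{j=1}^{n}P_j(z)\frac{\partial}{\partial z_j}$, where, in these coordinates, $W=\{z_1=\cdots=z_d=0\}$ and $m_i=m_W(P_i)$. Then, by a linear change of coordinates $w=Az$ preserving $W$, $\mathcal{F}$ may be described by a polynomial vector field $Y_p=\sum_{j=1}^{n}Q_j(w)\frac{\partial}{\partial w_j}$ with $$m_W(Q_j)=\begin{cases} m'_W(\mathcal F), & j=1,\ldots,d,\\ m_W(\mathcal F), & j=d+1,\ldots,n,\end{cases}$$ where $m'_W(\mathcal{F})=\min\{m_1,\ldots,m_d\}$.
   Context: For a function $P$ written as $P(z)=\sum_{|a|=q}z_1^{a_1}\cdots z_d^{a_d}P_a(z)$, $a=(a_1,\ldots,a_d)\in\mathbb Z_{\ge0}^d$, with at least one $P_a$ not vanishing identically on $\{z_1=\cdots=z_d=0\}$, the multiplicity of $P$ along $W$ is $m_W(P)=q$. The multiplicity of $\mathcal F$ along $W$ is $m_W(\mathcal F)=\min\{m_1,\ldots,m_n\}$. *)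

From mathcomp Require Import all_boot all_algebra.
From mathcomp Require Import complex.
From mathcomp Require Import mpoly.
From mathcomp Require Import Rstruct.
Set Implicit Arguments. Unset Strict Implicit. Unset Printing Implicit Defensive.
Import GRing.Theory Num.Theory.
Local Open Scope ring_scope.

Definition C : numClosedFieldType := complex Rdefinitions.R.

(* Degree of the monomial z^m in the first d variables z_1,...,z_d
   (Rocq indices 0,...,d-1). *)
Definition Wdeg (n d : nat) (m : 'X_{1.. n}) : nat :=
  (\sum_(i < n | (i < d)%N) m i)%N.

(* m_W(P) = q, with W = {z_1 = ... = z_d = 0}: P = sum_{|a|=q} z'^a P_a
   (z' = (z_1..z_d)) with some P_a not vanishing identically on W; i.e.
   every monomial of P has degree >= q in z_1..z_d and some monomial has
   degree exactly q in z_1..z_d.  (Undefined for P = 0.) *)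
Definition multW (n d : nat) (P : {mpoly C[n]}) (q : nat) : Prop :=
  (forall m, m \in msupp P -> (q <= Wdeg d m)%N) /\
  (exists2 m, m \in msupp P & Wdeg d m = q).

Definition is_min (S : nat -> Prop) (k : nat) : Prop :=
  S k /\ forall j, S j -> (k <= j)%N.

Definition inW (n d : nat) (z : 'cV[C]_n) : Prop :=
  forall i : 'I_n, (i < d)%N -> z i 0 = 0.

Definition preservesW (n d : nat) (A : 'M[C]_n) : Prop :=
  forall z : 'cV[C]_n, inW d z -> inW d (A *m z).

(* Let t j be an index of minimal multiplicity among P_1..P_d if j <= d, and
   among all the P_k otherwise, chosen so that t is idempotent.  Then the
   matrix N with N_{j,t j} = c_j for j <> t j (and 0 elsewhere) squares to
   zero, so A = 1 + N is invertible with inverse 1 - N; it is block lower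
   triangular, hence preserves W.  The components of A P are P_j + c_j P_{t j},
   and c_j is chosen so that a monomial of P_{t j} of minimal W-degree
   survives.  Finally, substituting A^{-1} w for z does not change
   multiplicities along W: a block lower triangular substitution can only
   raise them, and its inverse is of the same kind. *)

From mathcomp Require Import all_boot all_algebra.
From mathcomp Require Import complex.
From mathcomp Require Import mpoly.
From mathcomp Require Import Rstruct.
Set Implicit Arguments. Unset Strict Implicit. Unset Printing Implicit Defensive.
Import GRing.Theory Num.Theory.
Local Open Scope ring_scope.

Section MultWGe.
Variables (R : comNzRingType) (n d : nat).
Implicit Types (p : {mpoly R[n]}) (m : 'X_{1..n}) (L M : 'M[R]_n).

Lemma WdegD m1 m2 : Wdeg d (m1 + m2)%MM = (Wdeg d m1 + Wdeg d m2)%N.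
Proof. by rewrite /Wdeg -big_split /=; apply: eq_bigr => i _; rewrite mnmDE. Qed.

Lemma WdegE m : Wdeg d m = (\sum_(i < n) (i < d) * m i)%N.
Proof.
by rewrite /Wdeg big_mkcond /=; apply: eq_bigr => i _; case: ltnP; rewrite ?mul1n.
Qed.

Lemma WdegU (k : 'I_n) : Wdeg d U_(k)%MM = (k < d)%N.
Proof.
rewrite WdegE (bigD1 k) //= mnm1E eqxx muln1 big1 ?addn0 // => i /negbTE ki.
by rewrite mnm1E eq_sym ki muln0.
Qed.

Definition multW_ge p q : Prop := forall m, m \in msupp p -> (q <= Wdeg d m)%N.

Lemma multW_ge_leq p a b : (b <= a)%N -> multW_ge p a -> multW_ge p b.
Proof. by move=> ba h m /h; apply: leq_trans. Qed.

Lemma multW_ge0 q : multW_ge 0 q.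
Proof. by move=> m; rewrite msupp0. Qed.

Lemma multW_geD p1 p2 q : multW_ge p1 q -> multW_ge p2 q -> multW_ge (p1 + p2) q.
Proof. by move=> h1 h2 m /msuppD_le; rewrite mem_cat => /orP[/h1|/h2]. Qed.

Lemma multW_geZ c p q : multW_ge p q -> multW_ge (c *: p) q.
Proof. by move=> h m /msuppZ_le /h. Qed.

Lemma multW_ge_sum (I : Type) (r : seq I) (P : pred I) (F : I -> {mpoly R[n]}) q :
  (forall i, P i -> multW_ge (F i) q) -> multW_ge (\sum_(i <- r | P i) F i) q.
Proof.
move=> h; apply: (big_ind (fun p => multW_ge p q)) => //; first exact: multW_ge0.
by move=> x y; apply: multW_geD.
Qed.

Lemma multW_geM p1 p2 a b :
  multW_ge p1 a -> multW_ge p2 b -> multW_ge (p1 * p2) (a + b).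
Proof.
move=> h1 h2 m /msuppM_le /allpairsP [[m1 m2] /= [i1 i2 ->]].
by rewrite WdegD leq_add ?h1 ?h2.
Qed.

Lemma multW_geX p a k : multW_ge p a -> multW_ge (p ^+ k) (a * k).
Proof.
move=> h; elim: k => [|k ih]; first by rewrite muln0.
by rewrite exprS mulnS; apply: multW_geM.
Qed.

Lemma multW_ge_prod (I : Type) (r : seq I) (P : pred I) (F : I -> {mpoly R[n]}) a :
  (forall i, P i -> multW_ge (F i) (a i)) ->
  multW_ge (\prod_(i <- r | P i) F i) (\sum_(i <- r | P i) a i).
Proof.
move=> h; apply: (big_ind2 (fun p q => multW_ge p q)) => //.
by move=> p1 a1 p2 a2; apply: multW_geM.
Qed.

(* The bound [(i < d)%N] is 1 for the coordinates vanishing on W, 0 otherwise. *)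
Lemma multW_ge_comp p q (s : n.-tuple {mpoly R[n]}) :
  (forall i : 'I_n, multW_ge (tnth s i) (i < d)%N) ->
  multW_ge p q -> multW_ge (p \mPo s) q.
Proof.
move=> hs hp; rewrite comp_mpolyE big_seq; apply: multW_ge_sum => m /hp hm.
apply/multW_geZ/(multW_ge_leq hm); rewrite WdegE.
by apply: multW_ge_prod => i _; apply: multW_geX.
Qed.

Lemma comp_mpolyA p (s u : n.-tuple {mpoly R[n]}) :
  (p \mPo s) \mPo u = p \mPo [tuple tnth s i \mPo u | i < n].
Proof.
rewrite (comp_mpolyEX p s) (comp_mpolyEX p) raddf_sum /=; apply: eq_bigr => m _.
rewrite comp_mpolyZ !comp_mpolyX rmorph_prod /=; congr (_ *: _).
by apply: eq_bigr => i _; rewrite rmorphXn tnth_mktuple.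
Qed.

Definition linsubst M : n.-tuple {mpoly R[n]} :=
  [tuple \sum_(k < n) M i k *: 'X_k | i < n].

Lemma meval_linsubst M (v : 'I_n -> R) i :
  (tnth (linsubst M) i).@[v] = \sum_(k < n) M i k * v k.
Proof.
by rewrite tnth_mktuple raddf_sum /=; apply: eq_bigr => k _; rewrite mevalZ mevalXU.
Qed.

Lemma comp_linsubst_meval p M L (z : 'cV[R]_n) :
  (p \mPo linsubst M).@[fun i => (L *m z) i 0] = p.@[fun i => (M *m L *m z) i 0].
Proof.
rewrite comp_mpoly_meval; apply: meval_eq => i.
by rewrite meval_linsubst -mulmxA mxE; apply: eq_bigr => k _; rewrite mxE.
Qed.

Lemma linsubst_comp L M :
  [tuple tnth (linsubst L) i \mPo linsubst M | i < n] = linsubst (L *m M).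
Proof.
apply: eq_from_tnth => i; rewrite !tnth_mktuple raddf_sum /=.
under eq_bigr do rewrite comp_mpolyZ comp_mpolyXU -tnth_nth tnth_mktuple scaler_sumr.
rewrite exchange_big /=; apply: eq_bigr => l _.
by rewrite mxE scaler_suml; apply: eq_bigr => k _; rewrite scalerA.
Qed.

Lemma linsubst1 : linsubst 1%:M = [tuple 'X_i | i < n].
Proof.
apply: eq_from_tnth => i; rewrite !tnth_mktuple (bigD1 i) //= mxE eqxx scale1r.
by rewrite big1 ?addr0 // => k /negbTE ki; rewrite mxE eq_sym ki scale0r.
Qed.

Lemma comp_linsubstK p L M : L *m M = 1%:M ->
  (p \mPo linsubst L) \mPo linsubst M = p.
Proof. by move=> LM; rewrite comp_mpolyA linsubst_comp LM linsubst1 comp_mpoly_id. Qed.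

Definition lower_blockW M : Prop :=
  forall j k : 'I_n, (j < d)%N -> (d <= k)%N -> M j k = 0.

Lemma lower_blockW1 : lower_blockW 1%:M.
Proof.
move=> j k jd dk; rewrite mxE; case: eqP => // ejk.
by move: dk; rewrite -ejk leqNgt jd.
Qed.

Lemma lower_blockWD L M : lower_blockW L -> lower_blockW M -> lower_blockW (L + M).
Proof. by move=> hL hM j k jd dk; rewrite mxE hL // hM // addr0. Qed.

Lemma lower_blockWN M : lower_blockW M -> lower_blockW (- M).
Proof. by move=> hM j k jd dk; rewrite mxE hM // oppr0. Qed.

Lemma multW_ge_linsubst M p q :
  lower_blockW M -> multW_ge p q -> multW_ge (p \mPo linsubst M) q.
Proof.
move=> hM; apply: multW_ge_comp => i; rewrite tnth_mktuple.
apply: multW_ge_sum => k _; case: (ltnP i d) => [id|]; last by move=> _ m.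
case: (ltnP k d) => [kd|dk]; last by rewrite hM // scale0r; apply: multW_ge0.
by apply: multW_geZ => m; rewrite msuppX inE => /eqP ->; rewrite WdegU kd.
Qed.

End MultWGe.

Section Shear.
Variables (R : comNzRingType) (n : nat) (t : 'I_n -> 'I_n) (c : 'I_n -> R).
Hypothesis t_idem : idempotent_fun t.

Definition shearmx : 'M[R]_n :=
  \matrix_(j, k) if (k == t j) && (j != t j) then c j else 0.

Lemma shearmx_sqr : shearmx *m shearmx = 0.
Proof.
apply/matrixP => j k; rewrite !mxE big1 // => l _; rewrite !mxE.
case: eqP => [->|]; last by rewrite mul0r.
by rewrite [t (t j)]t_idem eqxx andbF mulr0.
Qed.

Lemma lower_blockW_shearmx d :
  (forall j : 'I_n, (j < d)%N -> (t j < d)%N) -> lower_blockW d shearmx.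
Proof.
move=> td j k jd dk; rewrite mxE; case: eqP => // ek.
by move: dk; rewrite ek leqNgt td.
Qed.

Lemma shearmx_unipotent : (1%:M - shearmx) *m (1%:M + shearmx) = 1%:M.
Proof. by rewrite mulmxDr !mulmxBl !mul1mx mulmx1 shearmx_sqr subr0 subrK. Qed.

Lemma shearmx_rowE (V : lmodType R) (P : 'I_n -> V) j :
  \sum_(k < n) (1%:M + shearmx) j k *: P k =
  if j == t j then P j else P j + c j *: P (t j).
Proof.
under eq_bigr do rewrite !mxE scalerDl.
rewrite big_split /= (bigD1 j) //= eqxx scale1r big1 ?addr0 => [|k /negbTE kj].
  rewrite (bigD1 (t j)) //= eqxx big1 ?addr0 => [|k /negbTE kt]; last by rewrite kt scale0r.
  by case: eqP => _; rewrite ?scale0r ?addr0.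
by rewrite eq_sym kj scale0r.
Qed.

End Shear.

Lemma lower_blockW_preservesW n d (A : 'M[C]_n) : lower_blockW d A -> preservesW d A.
Proof.
move=> hA z hz j jd; rewrite mxE big1 // => k _.
by case: (ltnP k d) => kd; [rewrite hz // mulr0 | rewrite hA // mul0r].
Qed.

Section MultW.
Variables (n d : nat).
Implicit Types (p : {mpoly C[n]}) (L M : 'M[C]_n).

Lemma multWP p q : multW d p q <-> multW_ge d p q /\ ~ multW_ge d p q.+1.
Proof.
split=> [[ge [m mp mq]]|[ge not_gt]]; first by split=> // /(_ m mp); rewrite mq ltnn.
split=> //.
have [/hasP[m mp le_mq]|/hasPn gt] := boolP (has (fun m => Wdeg d m <= q)%N (msupp p)).
  by exists m => //; apply/eqP; rewrite eqn_leq le_mq ge.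
by case: not_gt => m /gt; rewrite -ltnNge.
Qed.

Lemma multW_linsubst p q L M :
  lower_blockW d L -> lower_blockW d M -> L *m M = 1%:M ->
  multW d p q -> multW d (p \mPo linsubst L) q.
Proof.
move=> hL hM LM /multWP[ge not_gt]; apply/multWP; split.
  exact: multW_ge_linsubst.
by move/(multW_ge_linsubst hM); rewrite comp_linsubstK.
Qed.

(* The witness monomial m of p2 gets the coefficient 1 in p1 + c p2. *)
Lemma multW_addZ p1 p2 q :
  multW_ge d p1 q -> multW d p2 q -> exists c, multW d (p1 + c *: p2) q.
Proof.
move=> ge1 [ge2 [m mp2 mq]].
have nz2 : p2@_m != 0 by rewrite mcoeff_eq0 negbK.
exists ((1 - p1@_m) / p2@_m); split; first by apply: multW_geD => //; apply: multW_geZ.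
exists m => //; rewrite -[_ \in _]negbK -mcoeff_eq0 mcoeffD mcoeffZ mulfVK //.
by rewrite addrC subrK oner_neq0.
Qed.

Lemma shear_multW (P : 'I_n -> {mpoly C[n]}) (q : 'I_n -> nat) (t : 'I_n -> 'I_n) :
  idempotent_fun t -> (forall j : 'I_n, (j < d)%N -> (t j < d)%N) ->
  (forall j, multW_ge d (P j) (q j)) -> (forall j, multW d (P (t j)) (q j)) ->
  exists A Ai : 'M[C]_n,
    [/\ Ai *m A = 1%:M, lower_blockW d A, lower_blockW d Ai
      & forall j, multW d (\sum_(k < n) A j k *: P k) (q j)].
Proof.
move=> t_idem td lbound attained.
have /fin_all_exists[c hc] j := multW_addZ (lbound j) (attained j).
have hN := lower_blockW_shearmx c td.
exists (1%:M + shearmx t c), (1%:M - shearmx t c); split.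
- exact: shearmx_unipotent.
- exact: lower_blockWD (@lower_blockW1 C n d) hN.
- exact: lower_blockWD (@lower_blockW1 C n d) (lower_blockWN hN).
- by move=> j; rewrite shearmx_rowE; case: eqP => [{1}->|_]; [exact: attained | exact: (hc j)].
Qed.

End MultW.

Lemma min_selector n d (mi : 'I_n -> nat) mF mF' :
  is_min (fun k => exists i : 'I_n, k = mi i) mF ->
  is_min (fun k => exists2 i : 'I_n, (i < d)%N & k = mi i) mF' ->
  exists t : 'I_n -> 'I_n,
    [/\ idempotent_fun t, forall j : 'I_n, (j < d)%N -> (t j < d)%N
      & forall j, mi (t j) = if (j < d)%N then mF' else mF].
Proof.
move=> [[i1 e1] min] [[i0 i0d e0] min'].
have le_mF : (mF <= mF')%N by apply: min; exists i0.
have i1_geq_d : mF' != mF -> (d <= i1)%N.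
  move=> neq; rewrite leqNgt; apply: contra neq => i1_lt_d.
  by rewrite eqn_leq le_mF andbT e1 min' //; exists i1.
exists (fun j => if (j < d)%N || (mF' == mF) then i0 else i1); split.
- move=> j /=; case: eqP => [_|/eqP/i1_geq_d le_d_i1]; first by rewrite !orbT.
  rewrite !orbF; case: (ltnP j d) => _; first by rewrite i0d.
  by rewrite ltnNge le_d_i1.
- by move=> j ->.
- move=> j; case: (ltnP j d) => _ /=; first by rewrite e0.
  by case: eqP => [<-|_]; rewrite -?e0 -?e1.
Qed.

Theorem lemma2p1 (n d : nat) (hd : (0 < d <= n)%N)
  (P : 'I_n -> {mpoly C[n]}) (mi : 'I_n -> nat)
  (hmi : forall i, multW d (P i) (mi i))
  (mF mF' : nat)
  (hmF : is_min (fun k => exists i : 'I_n, k = mi i) mF)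
  (hmF' : is_min (fun k => exists2 i : 'I_n, (i < d)%N & k = mi i) mF') :
  exists (A : 'M[C]_n) (Q : 'I_n -> {mpoly C[n]}),
    [/\ A \in unitmx, preservesW d A,
        (forall (z : 'cV[C]_n) (j : 'I_n),
            (Q j).@[fun i => (A *m z) i 0]
            = \sum_(k < n) A j k * (P k).@[fun i => z i 0])
      & forall j : 'I_n, multW d (Q j) (if (j < d)%N then mF' else mF)].
Proof.
have [t [t_idem td mi_t]] := min_selector hmF hmF'.
have lbound j : multW_ge d (P j) (if (j < d)%N then mF' else mF).
  apply: multW_ge_leq (hmi j).1; case: ltnP => jd.
    by apply: hmF'.2; exists j.
  by apply: hmF.2; exists j.
have attained j : multW d (P (t j)) (if (j < d)%N then mF' else mF) by rewrite -mi_t.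
have [A [Ai [AiA hA hAi multW_AP]]] := shear_multW t_idem td lbound attained.
exists A, (fun j => (\sum_(k < n) A j k *: P k) \mPo linsubst Ai); split.
- by case: (mulmx1_unit AiA).
- exact: lower_blockW_preservesW.
- move=> z j; rewrite comp_linsubst_meval AiA mul1mx raddf_sum /=.
  by apply: eq_bigr => k _; rewrite mevalZ.
- by move=> j; apply: multW_linsubst hAi hA AiA (multW_AP j).
Qed.
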